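(* A coproduct in a $*$-category is orthogonal if and only if it can be extended to an orthogonal biproduct; that is, a coproduct $(X,s_1,\dots,s_n)$ of $X_1,\dots,X_n$ is orthogonal if and only if there exist morphisms $r_k\colon X\to X_k$ ($k=1,\dots,n$) such that $(X,s_1,r_1,\dots,s_n,r_n)$ is an orthogonal biproduct.
   Context: A $*$-category is a category with a choice of $f^*\colon Y\to X$ for each $f\colon X\to Y$ such that $1^*=1$, $(gf)^*=f^*g^*$, $(f^* )^*=f$; an endomorphism $e$ is Hermitian if $e^*=e$. A coproduct $(X,s_1,\dots,s_n)$ is orthogonal if $s_k^*s_j=0$ for all $j\neq k$. A biproduct $(X,s_1,r_1,\dots,s_n,r_n)$ (in a category with a zero object: $(X,s_1,\dots,s_n)$ a coproduct, $(X,r_1,\dots,r_n)$ a product, $r_ks_k=1$, $r_ks_j=0$ for $j\neq k$) is orthogonal if each idempotent $s_kr_k$ is Hermitian. *)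

From mathcomp Require Import all_boot.
Set Implicit Arguments. Unset Strict Implicit. Unset Printing Implicit Defensive.

Record Category := {
  Ob :> Type;
  Hom : Ob -> Ob -> Type;
  idm : forall A, Hom A A;
  comp : forall A B C, Hom B C -> Hom A B -> Hom A C;  (* comp g f = g o f *)
  comp_assoc : forall A B C D (h : Hom C D) (g : Hom B C) (f : Hom A B),
      comp h (comp g f) = comp (comp h g) f;
  id_left : forall A B (f : Hom A B), comp (idm B) f = f;
  id_right : forall A B (f : Hom A B), comp f (idm A) = f
}.
Arguments Hom {c} _ _.
Arguments idm {c} A.
Arguments comp {c A B C} _ _.

Record StarCategory := {
  cat :> Category;
  star : forall (A B : cat), Hom A B -> Hom B A;
  star_id : forall A : cat, star (idm A) = idm A;
  star_comp : forall (A B C : cat) (g : Hom B C) (f : Hom A B),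
      star (comp g f) = comp (star f) (star g);
  star_invol : forall (A B : cat) (f : Hom A B), star (star f) = f
}.
Arguments star {s A B} _.

Definition hermitian (C : StarCategory) (A : C) (e : Hom A A) : Prop :=
  star e = e.

Definition is_zero_object (C : Category) (Z : C) : Prop :=
  forall A : C,
    (inhabited (Hom A Z) /\ forall f g : Hom A Z, f = g) /\
    (inhabited (Hom Z A) /\ forall f g : Hom Z A, f = g).

Definition has_zero_object (C : Category) : Prop :=
  exists Z : C, is_zero_object Z.

(** f is the zero morphism: it factors through a zero object (in a category
    with a zero object this is the unique zero morphism A -> B). *)
Definition is_zero_mor (C : Category) (A B : C) (f : Hom A B) : Prop :=
  exists (Z : C) (g : Hom A Z) (h : Hom Z B), is_zero_object Z /\ f = comp h g.

Definition is_coproduct (C : Category) (n : nat) (Xs : 'I_n -> C) (X : C)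
    (s : forall k, Hom (Xs k) X) : Prop :=
  forall (Y : C) (f : forall k, Hom (Xs k) Y),
    exists u : Hom X Y, (forall k, comp u (s k) = f k) /\
      forall u' : Hom X Y, (forall k, comp u' (s k) = f k) -> u' = u.

Definition is_product (C : Category) (n : nat) (Xs : 'I_n -> C) (X : C)
    (r : forall k, Hom X (Xs k)) : Prop :=
  forall (Y : C) (f : forall k, Hom Y (Xs k)),
    exists u : Hom Y X, (forall k, comp (r k) u = f k) /\
      forall u' : Hom Y X, (forall k, comp (r k) u' = f k) -> u' = u.

Arguments is_coproduct {C n} Xs X s.
Arguments is_product {C n} Xs X r.

Definition orthogonal_coproduct (C : StarCategory) (n : nat) (Xs : 'I_n -> C)
    (X : C) (s : forall k, Hom (Xs k) X) : Prop :=
  is_coproduct Xs X s /\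
  forall j k : 'I_n, j != k -> is_zero_mor (comp (star (s k)) (s j)).

Definition is_biproduct (C : Category) (n : nat) (Xs : 'I_n -> C) (X : C)
    (s : forall k, Hom (Xs k) X) (r : forall k, Hom X (Xs k)) : Prop :=
  [/\ is_coproduct Xs X s, is_product Xs X r,
      forall k, comp (r k) (s k) = idm (Xs k) &
      forall j k : 'I_n, j != k -> is_zero_mor (comp (r k) (s j))].

Arguments is_biproduct {C n} Xs X s r.

Definition orthogonal_biproduct (C : StarCategory) (n : nat) (Xs : 'I_n -> C)
    (X : C) (s : forall k, Hom (Xs k) X) (r : forall k, Hom X (Xs k)) : Prop :=
  is_biproduct Xs X s r /\ forall k, hermitian (comp (s k) (r k)).
Arguments orthogonal_coproduct {C n} Xs X s.
Arguments orthogonal_biproduct {C n} Xs X s r.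

(* Forward direction: choose retractions r_k with r_k s_k = 1 and r_k s_j = 0
   (j <> k) by the coproduct property.  Since (X, s_k^* ) is a product, the
   s_k^* are jointly monic and, together with orthogonality, this shows that
   the Gram morphism s_k^* s_k is invertible with inverse r_k r_k^* and that
   r_k = (r_k r_k^* ) s_k^*.  Hence (X, r) is a product, and s_k r_k is of the
   Hermitian form f b f^* with b Hermitian.  Conversely, if s_k r_k is
   Hermitian then s_k^* = s_k^* s_k r_k, so s_k^* s_j factors through the
   zero morphism r_k s_j. *)
From Pilot Require Import Defs.
From mathcomp Require Import all_boot.
From Stdlib Require Import ClassicalEpsilon.
Set Implicit Arguments. Unset Strict Implicit. Unset Printing Implicit Defensive.
Local Notation comp := Defs.comp.

Lemma zero_mor_compl (C : Category) (A B D : C) (g : Hom B D) (f : Hom A B) :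
  is_zero_mor f -> is_zero_mor (comp g f).
Proof.
move=> [Z [a [h [HZ ->]]]]; exists Z, a, (comp g h); split => //.
by rewrite comp_assoc.
Qed.

Lemma zero_mor_compr (C : Category) (A B D : C) (f : Hom A B) (g : Hom D A) :
  is_zero_mor f -> is_zero_mor (comp f g).
Proof.
move=> [Z [a [h [HZ ->]]]]; exists Z, (comp a g), h; split => //.
by rewrite comp_assoc.
Qed.

Lemma zero_mor_star (C : StarCategory) (A B : C) (f : Hom A B) :
  is_zero_mor f -> is_zero_mor (star f).
Proof.
move=> [Z [a [h [HZ ->]]]]; exists Z, (star h), (star a); split => //.
by rewrite star_comp.
Qed.

Lemma zero_mor_uniq (C : Category) (A B : C) (f f' : Hom A B) :
  is_zero_mor f -> is_zero_mor f' -> f = f'.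
Proof.
move=> [Z [a [h [HZ ->]]]] [Z' [a' [h' [HZ' ->]]]].
have [[t] _] := (HZ Z').2.
have -> : h = comp h' t by apply: (HZ B).2.2.
by rewrite -comp_assoc; congr (comp h' _); apply: (HZ' A).1.2.
Qed.

Lemma zero_mor_exists (C : Category) (A B : C) :
  has_zero_object C -> exists f : Hom A B, is_zero_mor f.
Proof.
move=> [Z HZ]; have [[g] _] := (HZ A).1; have [[h] _] := (HZ B).2.
by exists (comp h g), Z, g, h.
Qed.

Lemma kronecker_family (C : Category) (I : eqType) (A : I -> C) (k : I) :
  has_zero_object C ->
  exists d : forall j, Hom (A j) (A k),
    d k = idm _ /\ forall j, j != k -> is_zero_mor (d j).
Proof.
move=> HZ.
have [z zP] : exists z : forall j, Hom (A j) (A k), forall j, is_zero_mor (z j).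
  exists (fun j => sval (constructive_indefinite_description _
                           (zero_mor_exists (A j) (A k) HZ))).
  by move=> j; case: constructive_indefinite_description.
exists (fun j => match k =P j with
                 | ReflectT e => eq_rect k (fun i => Hom (A i) (A k)) (idm _) j e
                 | ReflectF _ => z j
                 end).
split=> [|j Hjk].
  by case: (k =P k) => // e; rewrite (eq_irrelevance e erefl).
by case: (k =P j) => // e; rewrite e eqxx in Hjk.
Qed.

Lemma hermitian_comp_star (C : StarCategory) (A B : C) (f : Hom A B) :
  hermitian (comp f (star f)).
Proof. by rewrite /hermitian star_comp star_invol. Qed.

Lemma hermitian_star_comp (C : StarCategory) (A B : C) (f : Hom A B) :
  hermitian (comp (star f) f).
Proof. by rewrite /hermitian star_comp star_invol. Qed.

Lemma hermitian_conj (C : StarCategory) (A B : C) (f : Hom A B) (e : Hom A A) :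
  hermitian e -> hermitian (comp f (comp e (star f))).
Proof. by move=> He; rewrite /hermitian !star_comp star_invol He comp_assoc. Qed.

Section CoproductsAndProducts.
Variables (C : Category) (n : nat) (Xs : 'I_n -> C) (X : C).

Lemma coproduct_epi (s : forall k, Hom (Xs k) X) (Y : C) (u u' : Hom X Y) :
  is_coproduct Xs X s -> (forall j, comp u (s j) = comp u' (s j)) -> u = u'.
Proof.
move=> Hcop Hu; have [w [_ Hw]] := Hcop Y (fun j => comp u' (s j)).
by rewrite (Hw u Hu) (Hw u' (fun j => erefl)).
Qed.

Lemma product_mono (p : forall k, Hom X (Xs k)) (Y : C) (u u' : Hom Y X) :
  is_product Xs X p -> (forall j, comp (p j) u = comp (p j) u') -> u = u'.
Proof.
move=> Hprod Hu; have [w [_ Hw]] := Hprod Y (fun j => comp (p j) u').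
by rewrite (Hw u Hu) (Hw u' (fun j => erefl)).
Qed.

Lemma product_comp_iso (Ys : 'I_n -> C) (p : forall k, Hom X (Xs k))
    (q : forall k, Hom X (Ys k))
    (a : forall k, Hom (Xs k) (Ys k)) (b : forall k, Hom (Ys k) (Xs k)) :
  is_product Xs X p ->
  (forall k, comp (b k) (a k) = idm _) -> (forall k, comp (a k) (b k) = idm _) ->
  (forall k, q k = comp (a k) (p k)) -> is_product Ys X q.
Proof.
move=> Hprod ba ab qE Y f.
have [u [Hu Huniq]] := Hprod Y (fun k => comp (b k) (f k)).
exists u; split=> [k|u' Hu'].
  by rewrite qE -comp_assoc Hu comp_assoc ab id_left.
apply: Huniq => k.
by rewrite -Hu' qE comp_assoc (comp_assoc (b k)) ba id_left.
Qed.

Lemma coproduct_retractions (s : forall k, Hom (Xs k) X) :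
  has_zero_object C -> is_coproduct Xs X s ->
  exists r : forall k, Hom X (Xs k),
    (forall k, comp (r k) (s k) = idm _) /\
    (forall j k, j != k -> is_zero_mor (comp (r k) (s j))).
Proof.
move=> HZ Hcop.
have retr k : exists rk : Hom X (Xs k),
    comp rk (s k) = idm _ /\ forall j, j != k -> is_zero_mor (comp rk (s j)).
  have [d [dkk djk]] := kronecker_family Xs k HZ; have [u [Hu _]] := Hcop (Xs k) d.
  by exists u; split=> [|j Hjk]; rewrite Hu //; apply: djk.
exists (fun k => sval (constructive_indefinite_description _ (retr k))).
split=> [k|j k Hjk]; case: constructive_indefinite_description => rk /= [rk_id rk_zero].
  exact: rk_id.
exact: rk_zero.
Qed.

End CoproductsAndProducts.

Lemma star_coproduct_product (C : StarCategory) (n : nat) (Xs : 'I_n -> C)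
    (X : C) (s : forall k, Hom (Xs k) X) :
  is_coproduct Xs X s -> is_product Xs X (fun k => star (s k)).
Proof.
move=> Hcop Y f; have [v [Hv _]] := Hcop Y (fun k => star (f k)).
exists (star v); split=> [k|u' Hu'].
  by rewrite -star_comp Hv star_invol.
rewrite -(star_invol u'); congr star; apply: coproduct_epi Hcop _ => j.
by rewrite Hv -Hu' star_comp star_invol.
Qed.

Section ExtendOrthogonalCoproduct.
Variables (C : StarCategory) (n : nat) (Xs : 'I_n -> C) (X : C).
Variables (s : forall k, Hom (Xs k) X) (r : forall k, Hom X (Xs k)).
Hypothesis s_orth : orthogonal_coproduct Xs X s.
Hypothesis r_s_id : forall k, comp (r k) (s k) = idm _.
Hypothesis r_s_zero : forall j k, j != k -> is_zero_mor (comp (r k) (s j)).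

Let s_cop : is_coproduct Xs X s := s_orth.1.

Lemma inj_factors_through_star_retr k :
  s k = comp (star (r k)) (comp (star (s k)) (s k)).
Proof.
apply: product_mono (star_coproduct_product s_cop) _ => j.
case: (eqVneq j k) => [->|Hjk].
  by rewrite comp_assoc -star_comp r_s_id star_id id_left.
apply: zero_mor_uniq; first by apply: s_orth.2; rewrite eq_sym.
rewrite comp_assoc -star_comp.
exact/zero_mor_compr/zero_mor_star/r_s_zero.
Qed.

Lemma retr_gram_inv_l k :
  comp (comp (r k) (star (r k))) (comp (star (s k)) (s k)) = idm _.
Proof. by rewrite -comp_assoc -inj_factors_through_star_retr r_s_id. Qed.

Lemma retr_gram_inv_r k :
  comp (comp (star (s k)) (s k)) (comp (r k) (star (r k))) = idm _.
Proof.
have := congr1 star (retr_gram_inv_l k).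
by rewrite star_comp hermitian_comp_star hermitian_star_comp star_id.
Qed.

Lemma retr_factors_through_star_inj k :
  r k = comp (comp (r k) (star (r k))) (star (s k)).
Proof.
apply: coproduct_epi s_cop _ => j; case: (eqVneq j k) => [->|Hjk].
  by rewrite r_s_id -comp_assoc retr_gram_inv_l.
apply: zero_mor_uniq; first exact: r_s_zero.
by rewrite -comp_assoc; apply/zero_mor_compl/s_orth.2.
Qed.

Lemma retractions_product : is_product Xs X r.
Proof.
apply: product_comp_iso (star_coproduct_product s_cop) _ _ _.
- exact: retr_gram_inv_r.
- exact: retr_gram_inv_l.
- exact: retr_factors_through_star_inj.
Qed.

Lemma retractions_orthogonal_biproduct : orthogonal_biproduct Xs X s r.
Proof.
split; first by split=> //; exact: retractions_product.
move=> k; rewrite (retr_factors_through_star_inj k).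
exact/hermitian_conj/hermitian_comp_star.
Qed.

End ExtendOrthogonalCoproduct.

Lemma orthogonal_biproduct_coproduct (C : StarCategory) (n : nat)
    (Xs : 'I_n -> C) (X : C) (s : forall k, Hom (Xs k) X)
    (r : forall k, Hom X (Xs k)) :
  orthogonal_biproduct Xs X s r -> orthogonal_coproduct Xs X s.
Proof.
move=> [[Hcop _ r_s_id r_s_zero] Hherm]; split=> // j k Hjk.
have -> : star (s k) = comp (star (s k)) (comp (s k) (r k)).
  by rewrite -(Hherm k) star_comp comp_assoc -star_comp r_s_id star_id id_left.
by rewrite -!comp_assoc; apply/zero_mor_compl/zero_mor_compl/r_s_zero.
Qed.

Theorem proposition4p2 (C : StarCategory) (HZ : has_zero_object C)
    (n : nat) (Xs : 'I_n -> C) (X : C) (s : forall k, Hom (Xs k) X)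
    (Hcop : is_coproduct Xs X s) :
  orthogonal_coproduct Xs X s <->
  exists r : forall k, Hom X (Xs k), orthogonal_biproduct Xs X s r.
Proof.
split=> [s_orth | [r /orthogonal_biproduct_coproduct //]].
have [r [r_s_id r_s_zero]] := coproduct_retractions HZ Hcop.
by exists r; apply: retractions_orthogonal_biproduct.
Qed.
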